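(* Let $P$ be a finite poset with a unit OC interval representation $\{I_x : x\in P\}$ (each $I_x$ of length $1$, open or closed). Let $Q$ be the poset on the same ground set in which, for distinct $x,y$, $x<y$ in $Q$ if and only if the open interval $\operatorname{int}(I_x)$ lies entirely to the left of $\operatorname{int}(I_y)$ (i.e. the right endpoint of $I_x$ is at most the left endpoint of $I_y$). Partition $Q$ into antichains $A_1,\dots,A_t$ by letting $A_1$ be the set of minimal elements of $Q$, $A_2$ the set of minimal elements of $Q$ with $A_1$ removed, and so on. Then for all $i$ and all $j \ge i+2$, every $a \in A_i$ and $b \in A_j$ satisfy $a < b$ in $P$. Consequently, any two incomparable elements of $P$ lie in the same antichain $A_i$ or in consecutive antichains $A_i, A_{i+1}$.
   Context: Posets are finite and reflexive. A unit OC interval representation of a poset $P$ assigns to each element $x$ a real interval $I_x$ of length $1$ which is either open $(a,a+1)$ or closed $[a,a+1]$, such that for distinct $x,y$, $x<y$ in $P$ if and only if $I_x$ and $I_y$ are disjoint and every point of $I_x$ is less than every point of $I_y$. *)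

From HB Require Import structures.
From mathcomp Require Import all_boot all_order all_algebra.
From mathcomp Require Import reals.
Set Implicit Arguments. Unset Strict Implicit. Unset Printing Implicit Defensive.
Import Order.TTheory GRing.Theory Num.Theory.
Local Open Scope ring_scope.

Definition OCint (R : realType) (a : R) (cl : bool) : R -> Prop :=
  fun p => if cl then a <= p <= a + 1 else a < p < a + 1.

Definition left_of (R : realType) (I J : R -> Prop) : Prop :=
  (forall p, ~ (I p /\ J p)) /\ (forall p q, I p -> J q -> p < q).

Definition unit_OC_rep (d : Order.disp_t) (T : finPOrderType d) (R : realType)
  (a : T -> R) (cl : T -> bool) : Prop :=
  forall x y : T, x != y ->
    ((x < y)%O <-> left_of (OCint (a x) (cl x)) (OCint (a y) (cl y))).

(* Strict order of Q: x <_Q y iff x != y and right endpoint of I_x <= left endpoint of I_y. *)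
Definition Qlt (T : finType) (R : realType) (a : T -> R) (x y : T) : bool :=
  (x != y) && (a x + 1 <= a y).

Definition layer (T : finType) (R : realType) (a : T -> R) (S : {set T}) : {set T} :=
  [set x | (x \notin S) && [forall y, (y \notin S) ==> ~~ Qlt a y x]].

(* removed a n = A_1 ∪ ... ∪ A_n (with the paper's 1-based indexing). *)
Fixpoint removed (T : finType) (R : realType) (a : T -> R) (n : nat) : {set T} :=
  match n with
  | 0 => set0
  | n'.+1 => removed a n' :|: layer a (removed a n')
  end.

(* Antichain A i (0-based): A 0 is the paper's A_1, A i is the paper's A_{i+1}. *)
Definition antichainA (T : finType) (R : realType) (a : T -> R) (i : nat) : {set T} :=
  layer a (removed a i).

From mathcomp Require Import all_boot all_order all_algebra.
From mathcomp Require Import reals.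
From mathcomp Require Import zify.
Set Implicit Arguments. Unset Strict Implicit. Unset Printing Implicit Defensive.
Import Order.TTheory GRing.Theory Num.Theory.

(* Write a x for the left endpoint of I_x, so x <_Q y means
   a x + 1 <= a y.  The layers A_0, A_1, ... of Q (0-based) satisfy:
   - every y in A_(j+1) has a Q-predecessor z in A_j, i.e. a z + 1 <= a y;
   - every x in A_i lies strictly below w + 1 for any w not yet removed at
     stage i, i.e. a x < a w + 1.
   Chaining these along y in A_j, z in A_(j-1), w in A_(j-2), j-2 >= i, gives
   a x + 1 < a y whenever j >= i + 2.  Such a gap separates the unit
   intervals I_x and I_y whatever their types, so x < y in P.
   For the second statement we show that the layers exhaust T (each stage
   removes at least one new element while something is left), so two
   P-incomparable elements lie in layers whose indices differ by at most 1. *)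

Local Open Scope ring_scope.

Lemma OCint_bounds (R : realType) (b : R) (c : bool) (p : R) :
  OCint b c p -> b <= p <= b + 1.
Proof. by rewrite /OCint; case: c => // /andP [/ltW -> /ltW ->]. Qed.

Lemma left_of_gap (R : realType) (b b' : R) (c c' : bool) :
  b + 1 < b' -> left_of (OCint b c) (OCint b' c').
Proof.
move=> gap; have sep p q : OCint b c p -> OCint b' c' q -> p < q.
  move=> /OCint_bounds /andP [_ hp] /OCint_bounds /andP [hq _].
  exact: le_lt_trans hp (lt_le_trans gap hq).
by split=> [p [/sep hp /hp]|//]; rewrite ltxx.
Qed.

Lemma rep_lt_of_gap (d : Order.disp_t) (T : finPOrderType d) (R : realType)
    (a : T -> R) (cl : T -> bool) (x y : T) :
  unit_OC_rep a cl -> a x + 1 < a y -> (x < y)%O.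
Proof.
move=> rep gap; have xy : x != y.
  by apply: contraTneq gap => ->; rewrite -leNgt lerDl.
by apply/(rep x y xy); apply: left_of_gap.
Qed.

Section Layers.
Variables (T : finType) (R : realType) (a : T -> R).

Lemma removed_mono m n : (m <= n)%N -> removed a m \subset removed a n.
Proof.
elim: n => [|n IH]; first by rewrite leqn0 => /eqP ->.
rewrite leq_eqVlt => /orP [/eqP -> //|]; rewrite ltnS => /IH sub.
by apply: subset_trans sub _; rewrite subsetUl.
Qed.

Lemma layer_notin S x : x \in layer a S -> x \notin S.
Proof. by rewrite inE => /andP []. Qed.

Lemma layer_lt S x w : x \in layer a S -> w \notin S -> a x < a w + 1.
Proof.
rewrite inE => /andP [_ /forallP /(_ w)] minx wS; move: minx.
rewrite wS /Qlt negb_and negbK -ltNge => /orP [/eqP ->|//].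
by rewrite ltrDl ltr01.
Qed.

Lemma layer_pred j y : y \in antichainA a j.+1 ->
  exists2 z, z \in antichainA a j & a z + 1 <= a y.
Proof.
rewrite /antichainA inE /= in_setU negb_or => /andP [/andP [yR ynA] miny].
move: ynA; rewrite inE yR /= negb_forall => /existsP [z].
rewrite negb_imply negbK => /andP [zR Qzy]; exists z; last by case/andP: Qzy.
by have := forallP miny z; rewrite Qzy implybF negbK in_setU (negbTE zR).
Qed.

Lemma layer_gap i j x y : (i.+2 <= j)%N ->
  x \in antichainA a i -> y \in antichainA a j -> a x + 1 < a y.
Proof.
case: j => [|[|j]] //; rewrite !ltnS => ij xA /layer_pred [z /layer_pred [w wA wz] zy].
have wR : w \notin removed a i.
  apply: contra (layer_notin wA); apply/subsetP; exact: removed_mono.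
apply: (@lt_le_trans _ _ (a w + 1 + 1)); first by rewrite ltrD2r (layer_lt xA wR).
by apply: le_trans zy; rewrite lerD2r.
Qed.

(* While some element remains, the next layer is nonempty: it contains a
   remaining element with the smallest left endpoint. *)
Lemma layer_nonempty S : S != setT -> layer a S != set0.
Proof.
move=> SnT; have [z zS] : exists z, z \notin S.
  apply/existsP; apply: contraR SnT => /existsPn zS.
  by apply/eqP/setP => z; rewrite inE; apply/negPn.
case: (Order.TotalTheory.arg_minP (P := fun v => v \notin S) a zS) => w wS minw.
apply/set0Pn; exists w; rewrite inE wS; apply/forallP => v; apply/implyP => vS.
by rewrite /Qlt negb_and -ltNge (le_lt_trans (minw v vS)) ?orbT // ltrDl ltr01.
Qed.

Lemma card_removed n : (minn n #|T| <= #|removed a n|)%N.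
Proof.
elim: n => [|n IH] /=; first by rewrite min0n.
have [->|RnT] := eqVneq (removed a n) setT; first by rewrite setTU cardsT geq_minr.
have disj : [disjoint removed a n & layer a (removed a n)].
  by rewrite disjoint_sym disjoint_subset; apply/subsetP => x /layer_notin.
have := layer_nonempty RnT; rewrite -card_gt0.
rewrite cardsU (disjoint_setI0 disj) cards0 subn0.
(* Abstract the cardinals so that lia sees them as plain atoms. *)
move: IH; move: #|T| #|removed a n| #|layer a (removed a n)| => t r l; lia.
Qed.

Lemma exists_layer x : exists i, x \in antichainA a i.
Proof.
have : x \in removed a #|T|.
  suff -> : removed a #|T| = setT by rewrite inE.
  by apply/eqP; rewrite eqEcard subsetT cardsT; have := card_removed #|T|; rewrite minnn.
elim: #|T| => [|n IH]; first by rewrite inE.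
by rewrite /= in_setU => /orP [/IH //|xA]; exists n.
Qed.

End Layers.

Theorem mainTheorem3 (d : Order.disp_t) (T : finPOrderType d) (R : realType)
  (a : T -> R) (cl : T -> bool) :
  unit_OC_rep a cl ->
  (forall (i j : nat) (x y : T), (i.+2 <= j)%N ->
     x \in antichainA a i -> y \in antichainA a j -> (x < y)%O) /\
  (forall x y : T, x != y -> ~ (x < y)%O -> ~ (y < x)%O ->
     exists i j : nat, [/\ x \in antichainA a i, y \in antichainA a j &
       (i = j \/ j = i.+1 \/ i = j.+1)]).
Proof.
move=> rep.
have far_lt i j x y : (i.+2 <= j)%N ->
    x \in antichainA a i -> y \in antichainA a j -> (x < y)%O.
  by move=> ij xA yA; apply: rep_lt_of_gap rep (layer_gap ij xA yA).
split=> // x y _ nxy nyx.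
have [i xA] := exists_layer a x; have [j yA] := exists_layer a y.
exists i, j; split=> //.
have [ij|] := leqP i.+2 j; first by case: nxy; exact: far_lt ij xA yA.
have [ji|] := leqP j.+2 i; first by case: nyx; exact: far_lt ji yA xA.
Show. lia.
Qed.
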